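(* Let $B$ be a finite supersoluble brace, and let $p$ be the smallest prime dividing $|B|$. If $C$ is a subbrace of $B$ with $|B:C|=p$, then $C$ is an ideal of $B$.
   Context: A brace (skew left brace) is a set $B$ with two binary operations $+$ and $\cdot$ such that $(B,+)$ and $(B,\cdot)$ are groups and $a(b+c)=ab-a+ac$ for all $a,b,c\in B$. A subbrace is a subset that is a subgroup of both groups. $\lambda_a(b)=-a+ab$ defines a homomorphism $\lambda\colon(B,\cdot)\to\operatorname{Aut}(B,+)$. An ideal is a subbrace normal in both groups and invariant under all $\lambda_b$; quotients by ideals are braces. $\operatorname{Soc}(B)=\operatorname{Ker}\lambda\cap Z(B,+)$. $B$ is supersoluble if there is a finite chain of ideals $\{0\}=I_0\le\dots\le I_n=B$ such that for each $i$, either $(I_{i+1}/I_i,+)$ is infinite cyclic and $I_{i+1}/I_i\le\operatorname{Soc}(B/I_i)$, or $I_{i+1}/I_i$ has prime order. For a subbrace $C$ of a finite brace, $|B:C|=|B|/|C|$. (The paper phrases $p$ as the smallest prime in $\pi(B,+)$, the set of primes that are orders of elements of $(B,+)$.) *)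

From mathcomp Require Import all_boot.

Set Implicit Arguments.
Unset Strict Implicit.
Unset Printing Implicit Defensive.

(* A finite skew left brace on the carrier finType T:
   (T, add) and (T, mul) are groups (add not assumed commutative) and
   a(b+c) = ab - a + ac. *)
Record brace (T : finType) := Brace {
  badd : T -> T -> T;
  bopp : T -> T;
  bzero : T;
  bmul : T -> T -> T;
  binv : T -> T;
  bone : T;
  baddA : forall x y z, badd x (badd y z) = badd (badd x y) z;
  badd0r : forall x, badd bzero x = x;
  baddr0 : forall x, badd x bzero = x;
  baddNr : forall x, badd (bopp x) x = bzero;
  baddrN : forall x, badd x (bopp x) = bzero;
  bmulA : forall x y z, bmul x (bmul y z) = bmul (bmul x y) z;
  bmul1r : forall x, bmul bone x = x;
  bmulr1 : forall x, bmul x bone = x;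
  bmulVr : forall x, bmul (binv x) x = bone;
  bmulrV : forall x, bmul x (binv x) = bone;
  brace_law : forall a b c,
    bmul a (badd b c) = badd (badd (bmul a b) (bopp a)) (bmul a c)
}.

Section BraceDefs.
Variables (T : finType) (B : brace T).

Definition blambda (a b : T) : T := badd B (bopp B a) (bmul B a b).

Definition is_subbrace (C : {set T}) : Prop :=
  [/\ bzero B \in C,
      {in C &, forall x y, badd B x y \in C} &
      {in C, forall x, bopp B x \in C}] /\
  [/\ bone B \in C,
      {in C &, forall x y, bmul B x y \in C} &
      {in C, forall x, binv B x \in C}].

Definition is_ideal (I : {set T}) : Prop :=
  [/\ is_subbrace I,
      forall a, {in I, forall x, badd B (badd B a x) (bopp B a) \in I},
      forall a, {in I, forall x, bmul B (bmul B a x) (binv B a) \in I} &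
      forall b, {in I, forall x, blambda b x \in I}].

(* Supersoluble (finite case): a finite chain of ideals
   {0} = I_0 <= ... <= I_n = B with every factor I_{i+1}/I_i of prime order
   (the infinite-cyclic alternative cannot occur for a finite brace). *)
Definition supersoluble : Prop :=
  exists (n : nat) (I : nat -> {set T}),
    [/\ I 0 = [set bzero B],
        I n = [set: T],
        (forall i, i <= n -> is_ideal (I i)) &
        (forall i, i < n ->
           I i \subset I i.+1 /\ prime (#|I i.+1| %/ #|I i|))].

End BraceDefs.

Set Warnings "-notation-overridden,-redundant-canonical-projection".
From HB Require Import structures.
From mathcomp Require Import all_boot all_fingroup cyclic.
Set Implicit Arguments. Unset Strict Implicit. Unset Printing Implicit Defensive.

(* Take consecutive terms I < J of the supersoluble chain with I <= C and J not <= C.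
   Then C :&: J = I, so |C + J| = |J : I| |C| <= p |C| forces |J : I| = p and B = C + J.
   Conjugations in either group of B and the maps lambda_b permute the p - 1
   nontrivial cosets of I in J, with orbit lengths dividing |B|, whose prime divisors
   are all >= p; so they act trivially on J/I.  Thus J/I is central in both groups
   of B/I and fixed by lambda, and writing elements as c + j (or c j) with c in C,
   j in J shows that C is normal in both groups and lambda-invariant. *)

Lemma order_dvdn_iter (T : finType) (f : T -> T) n x :
  injective f -> iter n f x = x -> fingraph.order f x %| n.
Proof.
move=> f_inj fnx; have iter_order_mul k : iter (k * fingraph.order f x) f x = x.
  by elim: k => // k IHk; rewrite mulSn iterD IHk iter_order.
have fmodx : iter (n %% fingraph.order f x) f x = x.
  by rewrite {1}(divn_eq n (fingraph.order f x)) addnC iterD iter_order_mul in fnx.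
by rewrite /dvdn -(findex_iter (ltn_pmod n (fingraph.order_gt0 f x))) fmodx findex0.
Qed.

Lemma order_le_card_closed (T : finType) (f : T -> T) (S : {set T}) x :
  x \in S -> {homo f : y / y \in S} -> fingraph.order f x <= #|S|.
Proof.
move=> Sx fS; apply/subset_leq_card/subsetP => y /iter_findex <-.
by elim: (findex f x y) => //= k IHk; apply: fS.
Qed.

Lemma fixpoint_of_small_orbit (T : finType) (f : T -> T) (S : {set T}) n x :
  injective f -> x \in S -> {homo f : y / y \in S} -> iter n f x = x ->
  (forall r, prime r -> r %| n -> #|S| < r) -> f x = x.
Proof.
move=> f_inj Sx fS fnx S_lt; have le_order_S := order_le_card_closed Sx fS.
suff order1 : fingraph.order f x = 1 by rewrite -[RHS](iter_order f_inj x) order1.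
apply/eqP; rewrite eqn_leq fingraph.order_gt0 andbT leqNgt; apply/negP => order_gt1.
have dv_order_n := order_dvdn_iter f_inj fnx.
have := S_lt _ (pdiv_prime order_gt1) (dvdn_trans (pdiv_dvd _) dv_order_n).
by rewrite ltnNge (leq_trans (pdiv_leq (fingraph.order_gt0 f x)) le_order_S).
Qed.

Section SmallIndexFactor.
Local Open Scope group_scope.
Variables (gT : finGroupType) (I J : {group gT}).
Hypothesis sIJ : I \subset J.

Lemma mem_nontrivial_lcosets x :
  x \in J -> (x *: I \in lcosets I J :\ (I : {set gT})) = (x \notin I).
Proof.
move=> Jx; rewrite !inE mem_lcosets mulGSid // Jx andbT; congr negb.
by apply/eqP/idP => [<-|/lcoset_id //]; apply: lcoset_refl.
Qed.

Lemma card_nontrivial_lcosets : #|lcosets I J :\ (I : {set gT})| = #|J : I|.-1.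
Proof.
have I_lcosets : (I : {set gT}) \in lcosets I J.
  by rewrite -{1}(lcoset1 I) mem_lcosets mulGSid.
by rewrite -card_lcosets [#|lcosets I J|](cardsD1 (I : {set gT})) I_lcosets.
Qed.

Section Action.
Variables (f : gT -> gT) (n : nat).
Hypotheses (f_inj : injective f) (fM : {morph f : x y / x * y}).
Hypotheses (fI : {homo f : x / x \in I}) (fJ : {homo f : x / x \in J}).
Hypotheses (f_n : iter n f =1 id) (n_primes : forall r, prime r -> r %| n -> #|J : I| <= r).

Lemma imset_lcoset x : f @: (x *: I) = f x *: I.
Proof.
apply/eqP; rewrite eqEcard card_imset // !card_lcoset leqnn andbT.
by apply/subsetP => _ /imsetP[_ /lcosetP[y Iy ->] ->]; rewrite fM mem_lcoset mulKg fI.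
Qed.

Lemma mem_morphI x : (f x \in I) = (x \in I).
Proof.
have fII : f @: I = I.
  apply/eqP; rewrite eqEcard card_imset // leqnn andbT.
  by apply/subsetP => _ /imsetP[y /fI Ify ->].
by rewrite -{1}fII mem_imset.
Qed.

Lemma trivial_action_on_factor : {in J, forall j, j^-1 * f j \in I}.
Proof.
move=> j Jj; have [Ij | nIj] := boolP (j \in I); first by rewrite groupM ?groupV ?fI.
pose S := lcosets I J :\ (I : {set gT}).
have fS : {homo (fun X : {set gT} => f @: X) : X / X \in S}.
  move=> _ /[dup] /setD1P[_ /lcosetsP[x Jx ->]].
  by rewrite imset_lcoset !mem_nontrivial_lcosets ?fJ // mem_morphI.
have iter_lcoset k : iter k (fun X : {set gT} => f @: X) (j *: I) = iter k f j *: I.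
  by elim: k => //= k ->; rewrite imset_lcoset.
have fixed : f @: (j *: I) = j *: I.
  apply: (fixpoint_of_small_orbit (n := n) (imset_inj f_inj) _ fS) => [||r pr dvr].
  - by rewrite mem_nontrivial_lcosets.
  - by rewrite iter_lcoset f_n.
  by rewrite card_nontrivial_lcosets prednK ?indexg_gt0 ?n_primes.
by move: (lcoset_refl I (f j)); rewrite -imset_lcoset fixed mem_lcoset.
Qed.

End Action.

Lemma small_index_factor_central :
  [set: gT] \subset 'N(I) -> [set: gT] \subset 'N(J) ->
  (forall r, prime r -> r %| #|gT| -> #|J : I| <= r) ->
  {in J, forall j x, [~ j, x] \in I}.
Proof.
move=> nIT nJT primes_ge j Jj x; rewrite commgEl.
have nI y : (y ^ x \in I) = (y \in I) by rewrite memJ_norm ?(subsetP nIT).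
apply: (trivial_action_on_factor (f := conjg^~ x) (n := #|gT|)) => // [|y z|y|y|y].
- exact: conjg_inj.
- exact: conjMg.
- by rewrite nI.
- by rewrite memJ_norm ?(subsetP nJT).
by rewrite /= -(actX 'J) /= -cardsT expg_cardG ?inE ?conjg1.
Qed.

Variable C : {group gT}.
Hypotheses (sIC : I \subset C) (nsJC : ~~ (J \subset C)).

Lemma setI_eq_of_prime_index : prime #|J : I| -> C :&: J = I.
Proof.
move=> prJI; have sI_CJ : I \subset C :&: J by rewrite subsetI sIC.
have := Lagrange_index (subsetIr C J) sI_CJ.
have /primeP[_ /(_ _ (indexSg sI_CJ (subsetIr C J)))] := prJI.
case/orP => /eqP idx; first by rewrite (index1g sI_CJ idx).
rewrite idx -{2}[#|J : I|]mul1n => /eqP; rewrite eqn_pmul2r ?prime_gt0 // => /eqP.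
by move/(index1g (subsetIr C J)) => CJ_J; case/negP: nsJC; rewrite -CJ_J subsetIl.
Qed.

Lemma prime_index_complement (p : nat) :
  prime #|J : I| -> #|gT| = (p * #|C|)%N ->
  (forall r, prime r -> r %| #|gT| -> p <= r) ->
  #|J : I| = p /\ C * J = [set: gT].
Proof.
move=> prJI cardT p_min.
have card_CJ : #|C * J| = (#|J : I| * #|C|)%N.
  have := mul_cardG C J; rewrite (setI_eq_of_prime_index prJI) -(Lagrange sIJ).
  by rewrite mulnCA mulnC => /eqP; rewrite eqn_pmul2r // => /eqP <-; rewrite mulnC.
have le_q_p : #|J : I| <= p.
  by rewrite -(leq_pmul2r (cardG_gt0 C)) -card_CJ -cardT max_card.
have le_p_q : p <= #|J : I|.
  apply: p_min => //; apply: dvdn_trans (dvdn_indexg J I) _.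
  by rewrite -cardsT cardSg ?subsetT.
have q_p : #|J : I| = p by apply/eqP; rewrite eqn_leq le_q_p.
by split=> //; apply/eqP; rewrite eqEcard subsetT cardsT cardT card_CJ q_p leqnn.
Qed.

Lemma normal_of_central_factor :
  C * J = [set: gT] -> {in J, forall j x, [~ j, x] \in I} -> C <| [set: gT].
Proof.
move=> CJ_T cJI; rewrite /normal subsetT; apply/subsetP => g _.
have /mulsgP[c j Cc Jj ->] : g \in C * J by rewrite CJ_T inE.
rewrite inE; apply/subsetP => _ /imsetP[x Cx ->]; rewrite conjgM.
have Cxc : x ^ c \in C by rewrite groupJ.
by rewrite -(mulKVg (x ^ c) ((x ^ c) ^ j)) -commgEl groupM // -invgR groupV (subsetP sIC) ?cJI.
Qed.

End SmallIndexFactor.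

(* The groups (B,+) and (B,.) as finGroupTypes on copies of the carrier;
   add_set and mul_set below transport subsets of T to them. *)
Definition brace_add (T : finType) (B : brace T) : Type := T.
HB.instance Definition _ (T : finType) (B : brace T) := Finite.on (brace_add B).
HB.instance Definition _ (T : finType) (B : brace T) :=
  Finite_isGroup.Build (brace_add B) (@baddA T B) (@badd0r T B) (@baddNr T B).

Definition brace_mul (T : finType) (B : brace T) : Type := T.
HB.instance Definition _ (T : finType) (B : brace T) := Finite.on (brace_mul B).
HB.instance Definition _ (T : finType) (B : brace T) :=
  Finite_isGroup.Build (brace_mul B) (@bmulA T B) (@bmul1r T B) (@bmulVr T B).

Section BraceTheory.
Variables (T : finType) (B : brace T).
Local Notation add := (badd B).
Local Notation opp := (bopp B).
Local Notation mul := (bmul B).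
Local Notation inv := (binv B).
Local Notation lam := (blambda B).
Implicit Types A : {set T}.

Lemma bmul_lambda a b : mul a b = add a (lam a b).
Proof. by rewrite /blambda baddA baddrN badd0r. Qed.

Lemma bone_zero : bone B = bzero B.
Proof.
have e := brace_law B (bone B) (bzero B) (bzero B).
rewrite !bmul1r !baddr0 !badd0r in e.
by rewrite -(baddrN B (bone B)) -e baddr0.
Qed.

Lemma blambdaD a : {morph lam a : x y / add x y}.
Proof. by move=> x y; rewrite /blambda brace_law !baddA. Qed.

Lemma baddI a : injective (add a).
Proof. exact: (@mulgI (brace_add B) a). Qed.

Lemma blambdaM a b y : lam (mul a b) y = lam a (lam b y).
Proof.
apply: (@baddI (mul a b)); rewrite -bmul_lambda -bmulA [mul b y]bmul_lambda brace_law.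
by rewrite [mul a (lam b y)]bmul_lambda -baddA [add (opp a) _]baddA baddNr badd0r.
Qed.

Lemma blambda1 y : lam (bone B) y = y.
Proof.
have opp0 : opp (bzero B) = bzero B := @invg1 (brace_add B).
by rewrite /blambda bmul1r bone_zero opp0 badd0r.
Qed.

Lemma blambdaK a : cancel (lam a) (lam (inv a)).
Proof. by move=> y; rewrite -blambdaM bmulVr blambda1. Qed.

Lemma blambdaVK a : cancel (lam (inv a)) (lam a).
Proof. by move=> y; rewrite -blambdaM bmulrV blambda1. Qed.

Lemma iter_blambda (a : brace_mul B) n y : iter n (lam a) y = lam (a ^+ n)%g y.
Proof. by elim: n => [|n IHn] /=; rewrite ?blambda1 // IHn expgS blambdaM. Qed.

Lemma card_brace_add : #|{: brace_add B}| = #|T|.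
Proof. by apply: (@bij_eq_card (brace_add B) T id); exists id. Qed.

Lemma card_brace_mul : #|{: brace_mul B}| = #|T|.
Proof. by apply: (@bij_eq_card (brace_mul B) T id); exists id. Qed.

Lemma ideal_subbrace A : is_ideal B A -> is_subbrace B A.
Proof. by case. Qed.

Lemma subbrace_lambda A : is_subbrace B A -> {in A &, forall a x, lam a x \in A}.
Proof. by move=> [[_ addA oppA] [_ mulA _]] a x Aa Ax; rewrite /blambda addA ?oppA ?mulA. Qed.

Definition add_set (A : {set T}) : {set brace_add B} := (fun x : brace_add B => x : T) @^-1: A.
Definition mul_set (A : {set T}) : {set brace_mul B} := (fun x : brace_mul B => x : T) @^-1: A.

Lemma in_add_set A x : (x \in add_set A) = (x \in A).
Proof. by rewrite inE. Qed.

Lemma in_mul_set A x : (x \in mul_set A) = (x \in A).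
Proof. by rewrite inE. Qed.

Lemma card_add_set A : #|add_set A| = #|A|.
Proof. by apply: on_card_preimset; exists id. Qed.

Lemma card_mul_set A : #|mul_set A| = #|A|.
Proof. by apply: on_card_preimset; exists id. Qed.

Lemma add_setS A A' : (add_set A \subset add_set A') = (A \subset A').
Proof. by apply/subsetP/subsetP => sAA' x; have := sAA' x; rewrite !inE. Qed.

Lemma mul_setS A A' : (mul_set A \subset mul_set A') = (A \subset A').
Proof. by apply/subsetP/subsetP => sAA' x; have := sAA' x; rewrite !inE. Qed.

Lemma subbrace_add_group A : is_subbrace B A -> group_set (add_set A).
Proof.
by move=> [[A0 addA oppA] _]; apply/group_setP; split=> [|x y]; rewrite !inE //; apply: addA.
Qed.

Lemma subbrace_mul_group A : is_subbrace B A -> group_set (mul_set A).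
Proof.
by move=> [_ [A1 mulA invA]]; apply/group_setP; split=> [|x y]; rewrite !inE //; apply: mulA.
Qed.

Lemma add_set_normal A :
  (forall a, {in A, forall x, add (add a x) (opp a) \in A}) <->
  [set: brace_add B] \subset 'N(add_set A)%g.
Proof.
split=> [nA | /subsetP nA a x Ax].
  apply/subsetP => g _; rewrite inE; apply/subsetP => _ /imsetP[x Ax ->].
  by rewrite inE in Ax *; rewrite conjgE -{2}(invgK g) inE mulgA; apply: nA.
have : ((x : brace_add B) ^ (a : brace_add B)^-1 \in add_set A)%g.
  by rewrite memJ_norm ?nA ?inE.
by rewrite inE conjgE invgK mulgA.
Qed.

Lemma mul_set_normal A :
  (forall a, {in A, forall x, mul (mul a x) (inv a) \in A}) <->
  [set: brace_mul B] \subset 'N(mul_set A)%g.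
Proof.
split=> [nA | /subsetP nA a x Ax].
  apply/subsetP => g _; rewrite inE; apply/subsetP => _ /imsetP[x Ax ->].
  by rewrite inE in Ax *; rewrite conjgE -{2}(invgK g) inE mulgA; apply: nA.
have : ((x : brace_mul B) ^ (a : brace_mul B)^-1 \in mul_set A)%g.
  by rewrite memJ_norm ?nA ?inE.
by rewrite inE conjgE invgK mulgA.
Qed.

End BraceTheory.

Section IndexSmallestPrime.
Local Open Scope group_scope.
Variables (T : finType) (B : brace T) (p : nat) (C I J : {set T}).
Hypotheses (p_min : forall q, prime q -> q %| #|T| -> p <= q) (card_T : #|T| = (p * #|C|)%N).
Hypotheses (subC : is_subbrace B C) (idI : is_ideal B I) (idJ : is_ideal B J).
Hypotheses (sIJ : I \subset J) (prime_JI : prime (#|J| %/ #|I|)).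
Hypotheses (sIC : I \subset C) (nsJC : ~~ (J \subset C)).
Local Notation add := (badd B).
Local Notation lam := (blambda B).

Let Ca := Group (subbrace_add_group subC).
Let Ia := Group (subbrace_add_group (ideal_subbrace idI)).
Let Ja := Group (subbrace_add_group (ideal_subbrace idJ)).
Let Cm := Group (subbrace_mul_group subC).
Let Im := Group (subbrace_mul_group (ideal_subbrace idI)).
Let Jm := Group (subbrace_mul_group (ideal_subbrace idJ)).

Lemma factor_index_complement : #|Ja : Ia| = p /\ Ca * Ja = [set: brace_add B].
Proof.
apply: prime_index_complement; rewrite ?add_setS //.
- by rewrite -divgS ?add_setS //= !card_add_set.
- by rewrite card_brace_add card_add_set.
by rewrite card_brace_add.
Qed.

Lemma index_mul_factor : #|Jm : Im| = p.
Proof.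
have [<- _] := factor_index_complement.
by rewrite -!divgS ?mul_setS ?add_setS //= !card_mul_set !card_add_set.
Qed.

Lemma index_le_prime_divisors (gT : finGroupType) (H K : {group gT}) :
  #|H : K| = p -> forall r, prime r -> r %| #|T| -> #|H : K| <= r.
Proof. by move=> -> r; apply: p_min. Qed.

Lemma add_factor_central : {in Ja, forall j x, [~ j, x] \in Ia}.
Proof.
have [index_p _] := factor_index_complement.
apply: small_index_factor_central; rewrite ?add_setS //.
- by apply/add_set_normal; case: idI.
- by apply/add_set_normal; case: idJ.
by rewrite card_brace_add; apply: index_le_prime_divisors.
Qed.

Lemma mul_factor_central : {in Jm, forall j x, [~ j, x] \in Im}.
Proof.
apply: small_index_factor_central; rewrite ?mul_setS //.
- by apply/mul_set_normal; case: idI.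
- by apply/mul_set_normal; case: idJ.
by rewrite card_brace_mul; apply: index_le_prime_divisors; rewrite index_mul_factor.
Qed.

Lemma lambda_factor_trivial b : {in J, forall j : brace_add B, j^-1 * lam b j \in Ia}.
Proof.
have [index_p _] := factor_index_complement.
have sIJa : Ia \subset Ja by rewrite add_setS.
have [[_ _ _ lamI] [_ _ _ lamJ]] := (idI, idJ).
move=> j Jj; apply: (@trivial_action_on_factor _ Ia Ja sIJa (lam b) #|T|).
- exact: can_inj (blambdaK B b).
- exact: (blambdaD B b).
- by move=> y; rewrite !inE; apply: lamI.
- by move=> y; rewrite !inE; apply: lamJ.
- move=> y; rewrite (iter_blambda (b : brace_mul B)) -(card_brace_mul B) -cardsT.
  by rewrite expg_cardG ?inE ?blambda1.
- exact: index_le_prime_divisors.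
by rewrite inE.
Qed.

Lemma C_add_normal : Ca <| [set: brace_add B].
Proof.
have [_ CJ_T] := factor_index_complement.
by apply: normal_of_central_factor add_factor_central; rewrite ?add_setS.
Qed.

Lemma mul_complement : Cm * Jm = [set: brace_mul B].
Proof.
have [_ CJ_T] := factor_index_complement.
apply/eqP; rewrite eqEsubset subsetT; apply/subsetP => b _.
have /mulsgP[c j Cc Jj ->] : (b : brace_add B) \in Ca * Ja by rewrite CJ_T inE.
have [_ _ _ lamJ] := idJ; rewrite !in_add_set in Cc Jj.
change (add c j \in Cm * Jm); rewrite -[j](blambdaVK B c) -bmul_lambda.
by apply: mem_mulg; rewrite in_mul_set ?lamJ.
Qed.

Lemma C_mul_normal : Cm <| [set: brace_mul B].
Proof.
by apply: normal_of_central_factor mul_complement mul_factor_central; rewrite mul_setS.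
Qed.

Lemma lambdaJ_stable : {in J & C, forall j x, lam j x \in C}.
Proof.
move=> j x Jj Cx; pose k := [~ (j : brace_mul B), (x : brace_mul B)].
have Ik : k \in I by rewrite -(@in_mul_set _ B) mul_factor_central ?in_mul_set.
have jx : bmul B j x = bmul B x (bmul B j k).
  exact: etrans (commgC (j : brace_mul B) x) (esym (mulgA _ _ _)).
have -> : lam j x = (x : brace_add B) ^ (j : brace_add B) *
                     (((j : brace_add B)^-1 * lam x j) * lam x (lam j k)).
  rewrite [LHS]/blambda jx bmul_lambda [bmul B j k]bmul_lambda blambdaD !baddA.
  by rewrite conjgE !mulgA mulgK.
have sICa : Ia \subset Ca by rewrite add_setS.
have [_ _ _ lamI] := idI.
rewrite -(@in_add_set _ B); apply: (@groupM _ Ca).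
  by rewrite memJ_norm ?in_add_set // (subsetP (normal_norm C_add_normal)) ?inE.
apply: (@groupM _ Ca); apply: (subsetP sICa); first exact: lambda_factor_trivial.
by rewrite in_add_set !lamI.
Qed.

Lemma lambda_stable b : {in C, forall x, lam b x \in C}.
Proof.
move=> x Cx; have : (b : brace_mul B) \in Cm * Jm by rewrite mul_complement inE.
case/mulsgP => c j Cc Jj ->; rewrite !in_mul_set in Cc Jj.
by rewrite blambdaM (subbrace_lambda subC) ?lambdaJ_stable.
Qed.

Lemma ideal_of_index_smallest_prime : is_ideal B C.
Proof.
split=> //; last exact: lambda_stable.
  by apply/add_set_normal; apply: normal_norm C_add_normal.
by apply/mul_set_normal; apply: normal_norm C_mul_normal.
Qed.

End IndexSmallestPrime.

Lemma supersoluble_ideal_step (T : finType) (B : brace T) (C : {set T}) :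
  supersoluble B -> bzero B \in C -> ~~ ([set: T] \subset C) ->
  exists I J, [/\ is_ideal B I, is_ideal B J, prime (#|J| %/ #|I|),
                  I \subset J :&: C & ~~ (J \subset C)].
Proof.
move=> [n [I [I0 In ideal_I factor_I]]] C0 nsTC.
have exC : exists k, (k <= n) && (I k \subset C) by exists 0; rewrite I0 sub1set C0.
have le_n k : (k <= n) && (I k \subset C) -> k <= n by case/andP.
have [k /andP[le_kn sIkC] max_k] := ex_maxnP exC le_n.
have lt_kn : k < n.
  rewrite ltn_neqAle le_kn andbT; apply/eqP => ekn.
  by case/negP: nsTC; rewrite -In -ekn.
have [sIk prime_k] := factor_I k lt_kn.
exists (I k), (I k.+1); split=> //; [exact: ideal_I le_kn | exact: ideal_I lt_kn | |].
  by rewrite subsetI sIk.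
by apply/negP => sIkC'; have := max_k k.+1; rewrite lt_kn sIkC' ltnn => /(_ isT).
Qed.

Theorem theorem3p22 (T : finType) (B : brace T) (p : nat) (C : {set T}) :
  supersoluble B ->
  prime p -> p %| #|T| -> (forall q, prime q -> q %| #|T| -> p <= q) ->
  is_subbrace B C -> #|T| = (p * #|C|)%N ->
  is_ideal B C.
Proof.
move=> ssB prime_p _ p_min subC card_T.
have C0 : bzero B \in C by case: subC => [[]].
have nsTC : ~~ ([set: T] \subset C).
  apply/negP => /subset_leq_card; rewrite cardsT card_T -{2}[#|C|]mul1n.
  have C_gt0 : 0 < #|C| by apply/card_gt0P; exists (bzero B).
  by rewrite leq_pmul2r // leqNgt prime_gt1.
have [I [J [idI idJ prime_JI]]] := supersoluble_ideal_step ssB C0 nsTC.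
rewrite subsetI => /andP[sIJ sIC] nsJC.
exact: (ideal_of_index_smallest_prime p_min card_T subC idI idJ sIJ prime_JI sIC nsJC).
Qed.
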